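(* Let $a,b$ be non-negative integers with $a+b \ge 1$, and let $H_{a,b}$ be the graph defined in the context. Then \[ \lambda_3(H_{a,b}) = a+b-1 = \frac{|V(H_{a,b})|}{3}-1, \] and \[ \lim_{t \to \infty} \frac{\lambda_3\big(H_{a,b}^{[t]}\big)}{3(a+b)t} = \frac13 . \]
   Context: $\lambda_k(G)$ denotes the $k$-th largest eigenvalue (with multiplicity) of the adjacency matrix of a graph $G$. Let $v_1,\dots,v_6$ be the vertices of the 6-cycle $C_6$ in cyclic order. $H_{a,b}$ (the closed vertex multiplication of $C_6$ by $[a,b,a,b,a,b]$) is the graph obtained by replacing $v_i$ by a clique of size $a$ if $i$ is odd and of size $b$ if $i$ is even, and, for each edge $v_iv_{i+1}$ of $C_6$ (indices mod 6), joining every vertex of the clique of $v_i$ to every vertex of the clique of $v_{i+1}$; there are no other edges. Thus $|V(H_{a,b})| = 3(a+b)$. For a graph $H$ and a positive integer $t$, the closed blow-up $H^{[t]}$ is obtained by replacing each vertex of $H$ by a clique $K_t$ and each edge of $H$ by a complete bipartite graph $K_{t,t}$ between the corresponding cliques (non-adjacent vertices of $H$ give no edges). *)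

From HB Require Import structures.
From mathcomp Require Import all_boot all_order all_algebra.
From mathcomp Require Import all_classical all_reals all_analysis.
Set Implicit Arguments. Unset Strict Implicit. Unset Printing Implicit Defensive.
Import Order.TTheory GRing.Theory Num.Theory.
Local Open Scope ring_scope.

Definition adjmx (R : realType) (T : finType) (e : rel T) : 'M[R]_#|T| :=
  \matrix_(i, j) (e (enum_val i) (enum_val j))%:R.

Definition is_spectrum (R : realType) (n : nat) (A : 'M[R]_n) (s : seq R) : Prop :=
  sorted (fun x y => y <= x) s /\ char_poly A = \prod_(x <- s) ('X - x%:P).

(* lambda_k(A): k-th largest eigenvalue (1-based, with multiplicity). *)
Definition lambda (R : realType) (n : nat) (A : 'M[R]_n) (k : nat) : R :=
  nth 0 (xget [::] (is_spectrum A)) k.-1.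

(* The 6-cycle on 'I_6 (vertex v_{i+1} is index i). *)
Definition c6adj (i j : 'I_6) : bool :=
  ((val j == (val i).+1 %% 6) || (val i == (val j).+1 %% 6))%N.

(* Clique sizes [a,b,a,b,a,b]: v_{i+1} odd-indexed (i even) gets a. *)
Definition Hw (a b : nat) (i : 'I_6) : nat := if ~~ odd i then a else b.

Definition HV (a b : nat) : finType := {i : 'I_6 & 'I_(Hw a b i)}.

Definition Hrel (a b : nat) : rel (HV a b) :=
  fun x y => ((tag x == tag y) && (x != y)) || c6adj (tag x) (tag y).

Definition blowup (T : finType) (e : rel T) (t : nat) : rel (T * 'I_t)%type :=
  fun x y => ((x.1 == y.1) && (x.2 != y.2)) || e x.1 y.1.

Arguments adjmx R {T} e.
Arguments is_spectrum {R n} A s.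
Arguments lambda {R n} A k.
Arguments Hrel : clear implicits.
Arguments blowup {T} e t x y.

From HB Require Import structures.
From mathcomp Require Import all_boot all_order all_algebra.
From mathcomp Require Import all_classical all_reals all_analysis.
From mathcomp Require Import ring lra zify.
Set Implicit Arguments.
Unset Strict Implicit.
Unset Printing Implicit Defensive.

Import Order.TTheory GRing.Theory Num.Theory.
Import numFieldNormedType.Exports.
Local Open Scope classical_set_scope.
Local Open Scope ring_scope.

(* Let Q be the 0/1 matrix sending each vertex of H_{a,b} to its vertex of C_6,
   K = I + A(C_6) and D = Q^T Q the diagonal matrix of clique sizes.  Then
   A(H) = Q K Q^T - I, and Sylvester's identity y^6 det(y - Q (K Q^T)) =
   y^n det(y - K Q^T Q) gives (x+1)^6 chi_H(x) = (x+1)^n det((x+1) - K D).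
   That 6x6 determinant is y^2 (y - (a+b))^2 (y^2 - (a+b) y - 3ab), so the
   spectrum of H is r - 1 >= a+b-1 = a+b-1 >= -1 = ... = -1 >= r' - 1, where
   r >= a+b and r' <= 0 are the roots of the quadratic factor.  The closed
   blow-up H^[t] is again of this shape, with clique sizes at and bt. *)

Lemma is_spectrum_lambda (R : realType) n (A : 'M[R]_n) (L : seq R) k :
  is_spectrum A L -> lambda A k.+1 = nth 0 L k.
Proof.
move=> specL; have [sortedL charL] := specL.
have [sorted_s char_s] := xgetPex [::] (ex_intro _ L specL).
rewrite /lambda /=; set s := xget _ _ in sorted_s char_s *.
have perm_sL : perm_eq s L by apply: prod_XsubC_eq; rewrite -char_s charL.
suff -> : s = L by [].
apply: (sorted_eq _ _ sorted_s sortedL perm_sL).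
  by move=> x y z /= yx zy; apply: le_trans zy yx.
by move=> x y /andP [xy yx]; apply/eqP; rewrite eq_le xy yx.
Qed.

Lemma det_sub_mulmxC (R : comNzRingType) n m (y : R)
    (U : 'M[R]_(n, m)) (V : 'M[R]_(m, n)) :
  y ^+ m * \det (y%:M - U *m V) = y ^+ n * \det (y%:M - V *m U).
Proof.
set N := block_mx (@scalar_mx _ n y) U V (@scalar_mx _ m 1).
have eqUV : block_mx (y%:M - U *m V) U 0 1%:M = N *m block_mx 1%:M 0 (- V) 1%:M.
  by rewrite mulmx_block !mulmx1 !mulmx0 !mul1mx !mulmxN !add0r subrr.
have eqVU : block_mx (@scalar_mx _ n y) U 0 (y%:M - V *m U)
            = block_mx 1%:M 0 (- V) y%:M *m N.
  rewrite mulmx_block !mul1mx !mul0mx !addr0 mulNmx mul_scalar_mx mul_mx_scalar.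
  by rewrite addNr mulmx1 mulNmx addrC.
have detUV := congr1 determinant eqUV; have detVU := congr1 determinant eqVU.
rewrite det_ublock det1 mulr1 det_mulmx det_lblock !det1 mulr1 in detUV.
rewrite det_ublock det_mulmx det_lblock det1 mul1r !det_scalar in detVU.
by rewrite detUV detVU mulr1.
Qed.

Section ThirdEigenvalue.
Variables (R : realType) (n : nat) (A : 'M[R]_n).
Local Notation Y := ('X + 1 : {poly R}).

Lemma XsubC_sub1 (c : R) : 'X - (c - 1)%:P = Y - c%:P.
Proof. by rewrite polyCB polyC1; ring. Qed.

Lemma Xadd1_neq0 : Y != 0.
Proof. by rewrite -[1]opprK -polyC1 -polyCN polyXsubC_eq0. Qed.

Lemma lambda3_of_char_poly (s p q : R) :
  (3 <= n)%N -> 0 < s <= p -> q <= 0 ->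
  Y ^+ 6 * char_poly A
    = Y ^+ n * (Y ^+ 2 * (Y - s%:P) ^+ 2 * ((Y - p%:P) * (Y - q%:P))) ->
  lambda A 3 = s - 1.
Proof.
move=> n_ge3 /andP [s_gt0 sp] q_le0 charA.
have Y6_neq0 : Y ^+ 6 != 0 by rewrite expf_neq0 // Xadd1_neq0.
have [n3 | n_ge4] := eqVneq n 3%N.
  (* For n = 3, x + 1 must divide the cofactor; evaluating at -1 forces q = 0. *)
  have q0 : q = 0.
    have charA3 : Y * char_poly A = (Y - s%:P) ^+ 2 * ((Y - p%:P) * (Y - q%:P)).
      apply: (mulfI (expf_neq0 5 Xadd1_neq0)).
      by rewrite [LHS]mulrA -exprSr charA n3; ring.
    have := congr1 (horner^~ (-1)) charA3; rewrite !hornerE addNr mul0r !sub0r.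
    move=> /esym/eqP; rewrite /= !mulf_eq0 !oppr_eq0 (gt_eqF s_gt0).
    by rewrite (gt_eqF (lt_le_trans s_gt0 sp)) => /eqP.
  have specA : is_spectrum A [:: p - 1; s - 1; s - 1].
    split; first by rewrite /= lexx lerD2r sp.
    apply: (mulfI Y6_neq0); rewrite charA n3 q0 !big_cons big_nil !XsubC_sub1; ring.
  exact: (is_spectrum_lambda 2 specA).
have specA : is_spectrum A
    ([:: p - 1; s - 1; s - 1] ++ nseq (n - 4) (-1) ++ [:: q - 1]).
  split.
    rewrite /= lerD2r sp lexx /=.
    have : -1 <= s - 1 by lra.
    elim: (n - 4)%N (s - 1) => [|k IH] x x_ge /=; last by rewrite x_ge IH.
    by rewrite andbT; lra.
  apply: (mulfI Y6_neq0).
  rewrite charA !big_cat big_nseq iter_mulr_1 !big_cons !big_nil !XsubC_sub1.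
  have -> : 'X - (-1)%:P = Y by rewrite polyCN opprK polyC1.
  have -> : Y ^+ n = Y ^+ (n - 4) * Y ^+ 4 by rewrite -exprD subnK //; lia.
  rewrite /=; ring.
exact: (is_spectrum_lambda 2 specA).
Qed.

End ThirdEigenvalue.

Section ClosedVertexMultiplication.
Variables (R : realType) (m : nat) (g : rel 'I_m) (T : finType) (f : T -> 'I_m).
Hypothesis g_irr : irreflexive g.
Variable e : rel T.
Hypothesis eE : forall x y, e x y = ((f x == f y) && (x != y)) || g (f x) (f y).

Local Notation n := #|T|.
Local Notation fib i := (f (enum_val i)).

Definition fibre_mx : 'M[R]_(n, m) := \matrix_(i, k) (fib i == k)%:R.
Definition closed_adjmx : 'M[R]_m := \matrix_(k, l) ((k == l) || g k l)%:R.
Definition fibre_sizes : 'rV[R]_m := \row_k #|[pred x | f x == k]|%:R.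

Lemma fibre_mx_mul p (M : 'M[R]_(m, p)) i l : (fibre_mx *m M) i l = M (fib i) l.
Proof.
rewrite mxE (bigD1 (fib i)) //= mxE eqxx mul1r big1 ?addr0 // => k /negPf nk.
by rewrite mxE eq_sym nk mul0r.
Qed.

Lemma mul_tr_fibre_mx p (M : 'M[R]_(p, m)) k j : (M *m fibre_mx^T) k j = M k (fib j).
Proof. by rewrite -[M]trmxK -trmx_mul mxE fibre_mx_mul !mxE. Qed.

Lemma tr_fibre_mx_mul : fibre_mx^T *m fibre_mx = diag_mx fibre_sizes.
Proof.
apply/matrixP => k l; rewrite !mxE.
under eq_bigr => i _ do rewrite !mxE -natrM mulnb.
rewrite -(big_enum_val (A := predT) (fun x => ((f x == k) && (f x == l))%:R)) /=.
have [<- | nkl] := eqVneq k l; last first.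
  by rewrite mulr0n big1 // => x _; case: (f x =P k) => // ->; rewrite (negPf nkl).
rewrite mulr1n -natr_sum -sum1_card; congr _%:R.
rewrite [RHS]big_mkcond /=; apply: eq_big => // x _.
by rewrite andbb inE; case: (f x == k).
Qed.

Lemma adjmx_fibre_decomp : adjmx R e = fibre_mx *m closed_adjmx *m fibre_mx^T - 1.
Proof.
apply/matrixP => i j; rewrite [RHS]mxE mul_tr_fibre_mx fibre_mx_mul !mxE eE.
have [<- | nij] := eqVneq i j; first by rewrite !eqxx g_irr /= subrr.
by rewrite (inj_eq enum_val_inj) (negPf nij) /= andbT subr0.
Qed.

Lemma char_poly_closed_mult :
  ('X + 1) ^+ m * char_poly (adjmx R e)
  = ('X + 1) ^+ n * \det (('X + 1)%:M - map_mx polyC (closed_adjmx *m diag_mx fibre_sizes)).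
Proof.
rewrite /char_poly /char_poly_mx adjmx_fibre_decomp map_mxB map_mx1 !map_mxM.
have -> : forall M : 'M[{poly R}]_n, 'X%:M - (M - 1%:M) = ('X + 1)%:M - M.
  by move=> M; rewrite [in RHS]raddfD /= opprB addrA.
by rewrite -mulmxA det_sub_mulmxC -!map_mxM -mulmxA tr_fibre_mx_mul.
Qed.

End ClosedVertexMultiplication.

(* [Nat.leb], unlike [leq], is evaluated by [simpl], so the entries of iterated
   minors of a matrix given by a function on [nat] reduce on numerals. *)
Definition minor_fun (R : Type) (g : nat -> nat -> R) (j k l : nat) : R :=
  g k.+1 (if Nat.leb j l then l.+1 else l).
Arguments minor_fun {R} g j k l : simpl never.

Lemma Nat_leb_leq j l : Nat.leb j l = (j <= l)%N.
Proof. by elim: j l => [|j IH] [|l] //=; rewrite IH. Qed.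

Lemma expand_det_nat (R : comNzRingType) n (g : nat -> nat -> R) :
  \det (\matrix_(k < n.+1, l < n.+1) g k l) =
  \sum_(j < n.+1) g 0%N j * ((-1) ^+ j * \det (\matrix_(k < n, l < n) minor_fun g j k l)).
Proof.
rewrite (expand_det_row _ ord0); apply: eq_bigr => j _.
rewrite !mxE /cofactor add0n; congr (_ * (_ * \det _)).
by apply/matrixP => k l; rewrite !mxE /minor_fun /= /bump Nat_leb_leq; case: (leqP j l).
Qed.

(* The entries of y - K D, where K = I + A(C_6) and D = diag(a,b,a,b,a,b). *)
Definition c6_charmx_entry (R : comNzRingType) (y a b : R) (k l : nat) : R :=
  match k, l with
  | 0, 0 => y - a | 0, 1 => - b | 0, 5 => - b
  | 1, 0 => - a | 1, 1 => y - b | 1, 2 => - a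
  | 2, 1 => - b | 2, 2 => y - a | 2, 3 => - b
  | 3, 2 => - a | 3, 3 => y - b | 3, 4 => - a
  | 4, 3 => - b | 4, 4 => y - a | 4, 5 => - b
  | 5, 4 => - a | 5, 5 => y - b | 5, 0 => - a
  | _, _ => 0
  end.

Lemma det_c6_charmx (R : comNzRingType) (y a b : R) :
  \det (\matrix_(k < 6, l < 6) c6_charmx_entry y a b k l) =
  y ^+ 2 * (y - (a + b)) ^+ 2 * (y ^+ 2 - (a + b) * y - 3 * a * b).
Proof.
rewrite !(@expand_det_nat _ 5) !big_ord_recl !big_ord0 /= ?mul0r ?add0r ?addr0.
rewrite !(@expand_det_nat _ 4) !big_ord_recl !big_ord0 /= ?mul0r ?add0r ?addr0.
rewrite !(@expand_det_nat _ 3) !big_ord_recl !big_ord0 /= ?mul0r ?add0r ?addr0.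
rewrite !(@expand_det_nat _ 2) !big_ord_recl !big_ord0 /= ?mul0r ?add0r ?addr0.
rewrite !(@expand_det_nat _ 1) !big_ord_recl !big_ord0 /= ?mul0r ?add0r ?addr0.
rewrite !(@expand_det_nat _ 0) !big_ord_recl !big_ord0 /= ?mul0r ?add0r ?addr0.
by rewrite !det_mx00 /minor_fun /bump /=; ring.
Qed.

Lemma quadratic_roots_bounds (R : rcfType) (s c : R) : 0 <= s -> 0 <= c ->
  exists p q : R, [/\ s <= p, q <= 0, p + q = s & p * q = - c].
Proof.
move=> s_ge0 c_ge0; set d := Num.sqrt (s ^+ 2 + 4 * c).
have d_ge0 : 0 <= d := sqrtr_ge0 _.
have d2 : d ^+ 2 = s ^+ 2 + 4 * c by rewrite sqr_sqrtr //; nra.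
exists ((s + d) / 2), ((s - d) / 2); split; [nra | nra | by field |].
have -> : (s + d) / 2 * ((s - d) / 2) = (s ^+ 2 - d ^+ 2) / 4 by field.
by rewrite d2; field.
Qed.

Lemma c6adj_irr : irreflexive c6adj.
Proof. by case=> [[|[|[|[|[|[|//]]]]]] ?]. Qed.

Section C6Multiplication.
Variables (R : realType) (a b : nat) (T : finType) (f : T -> 'I_6).
Hypothesis card_fibre : forall k, #|[pred x | f x == k]| = Hw a b k.
Variable e : rel T.
Hypothesis eE : forall x y, e x y = ((f x == f y) && (x != y)) || c6adj (f x) (f y).

Local Notation Y := ('X + 1 : {poly R}).
Local Notation s := ((a + b)%:R : R).

Lemma card_C6_mult : #|T| = (3 * (a + b))%N.
Proof.
rewrite -sum1_card (partition_big f predT) //=.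
rewrite (eq_bigr (Hw a b)) => [|k _]; last by rewrite -card_fibre -sum1_card.
by rewrite !big_ord_recr big_ord0 /= /Hw /=; lia.
Qed.

Lemma C6_charmxE :
  Y%:M - map_mx polyC (closed_adjmx R c6adj *m diag_mx (fibre_sizes R f))
  = \matrix_(k < 6, l < 6) c6_charmx_entry Y a%:R%:P b%:R%:P k l.
Proof.
apply/matrixP => k l; rewrite mul_mx_diag !mxE card_fibre.
case: k l => [[|[|[|[|[|[|//]]]]]] ?] [[|[|[|[|[|[|//]]]]]] ?]; rewrite /c6adj /Hw /=.
all: by rewrite ?mulr1n ?mulr0n ?mul1r ?mul0r ?sub0r ?subr0 ?polyC0 ?oppr0.
Qed.

Lemma char_poly_C6_mult :
  Y ^+ 6 * char_poly (adjmx R e)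
  = Y ^+ #|T| * (Y ^+ 2 * (Y - s%:P) ^+ 2 * (Y ^+ 2 - s%:P * Y - (3 * a * b)%:R%:P)).
Proof.
rewrite (char_poly_closed_mult R c6adj_irr eE) C6_charmxE det_c6_charmx.
by rewrite -polyCD -natrD !natrM !polyCM !polyC_natr.
Qed.

Lemma lambda3_C6_mult : (1 <= a + b)%N -> lambda (adjmx R e) 3 = s - 1.
Proof.
move=> ab_gt0.
have [p [q [sp q_le0 pq_sum pq_prod]]] :
    exists p q : R, [/\ s <= p, q <= 0, p + q = s & p * q = - (3 * a * b)%:R].
  by apply: quadratic_roots_bounds; rewrite ler0n.
apply: (lambda3_of_char_poly (p := p) (q := q)) => //.
- by rewrite card_C6_mult; lia.
- by rewrite sp ltr0n ab_gt0.
apply: eq_trans char_poly_C6_mult _; congr (_ * (_ * _)).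
by rewrite -pq_sum -[(3 * a * b)%:R]opprK -pq_prod polyCD polyCN polyCM; ring.
Qed.

End C6Multiplication.

Lemma cvg_ratio_third (R : realType) (c : nat) : (0 < c)%N ->
  (fun t : nat => ((c * t.+1)%:R - 1) / (3 * c * t.+1)%:R : R) @ \oo --> (1 / 3 : R).
Proof.
move=> c_gt0; have c_neq0 : c%:R != 0 :> R by rewrite pnatr_eq0 -lt0n.
have -> : (fun t : nat => ((c * t.+1)%:R - 1) / (3 * c * t.+1)%:R : R)
          = (fun t => 1 / 3 - (3 * c%:R)^-1 * harmonic t).
  apply/funext => t /=; rewrite !natrM; field.
  by rewrite c_neq0 andbT addrC natr1 pnatr_eq0.
have lim : (fun t => 1 / 3 - (3 * c%:R)^-1 * harmonic t)
           @ \oo --> (1 / 3 - (3 * c%:R)^-1 * 0 : R).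
  exact: cvgB (cvg_cst _) (cvgMl_tmp cvg_harmonic).
by rewrite mulr0 subr0 in lim.
Qed.

Lemma card_fibre_tag (a b : nat) (k : 'I_6) :
  #|[pred x : HV a b | tag x == k]| = Hw a b k.
Proof.
pose F (j : 'I_(Hw a b k)) : HV a b := Tagged (fun i => 'I_(Hw a b i)) j.
have F_inj : injective F.
  by move=> j1 j2 /(congr1 (tagged_as (F j1))); rewrite !tagged_asE.
rewrite -[RHS]card_ord -(card_codom F_inj); apply: eq_card => x; rewrite inE.
apply/idP/codomP => [/eqP | [j ->]]; last by rewrite /= eqxx.
by case: x => i j /= ik; subst i; exists j.
Qed.

Lemma card_fibre_blowup (a b t : nat) (k : 'I_6) :
  #|[pred x : HV a b * 'I_t | tag x.1 == k]| = Hw (a * t) (b * t) k.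
Proof.
rewrite (eq_card (B := [predX [pred y : HV a b | tag y == k] & 'I_t])); last first.
  by case=> x y; rewrite !inE /= andbT.
by rewrite cardX card_fibre_tag card_ord /Hw; case: ifP.
Qed.

Lemma blowup_HrelE (a b t : nat) (x y : HV a b * 'I_t) :
  blowup (Hrel a b) t x y
  = ((tag x.1 == tag y.1) && (x != y)) || c6adj (tag x.1) (tag y.1).
Proof.
case: x y => [x1 x2] [y1 y2]; rewrite /blowup /Hrel /= xpair_eqE negb_and.
by have [->|x1y1] := eqVneq x1 y1; rewrite ?eqxx ?andbT.
Qed.

Theorem theorem2p2 (R : realType) (a b : nat) (hab : (1 <= a + b)%N) :
  lambda (adjmx R (Hrel a b)) 3 = (a + b)%:R - 1 /\
  (a + b)%:R - 1 = (#|HV a b|%:R / 3 : R) - 1 /\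
  (fun t : nat =>
     lambda (adjmx R (blowup (Hrel a b) t)) 3 / (3 * (a + b) * t)%:R)
    @ \oo --> (1 / 3 : R).
Proof.
have lambda3_blowup t : (0 < t)%N ->
    lambda (adjmx R (blowup (Hrel a b) t)) 3 = ((a + b) * t)%:R - 1.
  move=> t_gt0; rewrite mulnDl.
  apply: (lambda3_C6_mult R (card_fibre_blowup a b t) (@blowup_HrelE a b t)).
  by rewrite -mulnDl muln_gt0 hab.
split; first exact: (lambda3_C6_mult R (card_fibre_tag a b) (fun _ _ => erefl) hab).
split; first by rewrite (card_C6_mult (card_fibre_tag a b)) natrM mulrC mulKf.
rewrite -cvg_shiftS /=.
under eq_fun do rewrite lambda3_blowup //.
exact: cvg_ratio_third.
Qed.
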